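(* Let $\alpha_1,\alpha_2,\beta_1,\beta_2$ be positive constants, and let $\{a_k\}_{k\ge0}$, $\{b_k\}_{k\ge1}$ be non-negative sequences with $a_{k+1}\le\alpha_1a_k^2+\alpha_2$ for all $k\ge0$ and $b_{k+1}\le\beta_1b_k+\beta_2b_k^2$ for all $k\ge1$. Assume $\alpha_2\le\frac1{4\alpha_1}$ and $\beta_1<1$. If $a_0=0$ and $b_1\le\frac{\gamma-\beta_1}{\beta_2}$ for some $\gamma\in(\beta_1,1)$, then \[ 0\le\sup_{k\ge0}a_k\le2\alpha_2,\qquad \sum_{k=1}^\infty b_k\le\frac{b_1}{1-\gamma}. \] *)

From Stdlib Require Import Reals.
From Coquelicot Require Export Coquelicot.

(* Both recursions are controlled by an invariant interval.  For [a], the map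
   [x |-> alpha1 x^2 + alpha2] sends [0, 2 alpha2] into itself as soon as
   [4 alpha1 alpha2 <= 1].  For [b], as long as [beta2 b_k <= gamma - beta1]
   the recursion is a contraction [b_(k+1) <= gamma b_k]; the contraction
   keeps [b_k] below [b_1], which preserves the condition, so [b_(k+1) <=
   gamma^k b_1] and the series is dominated by a geometric one. *)

From Stdlib Require Import Reals Lra Psatz.
From Coquelicot Require Import Coquelicot.
Open Scope R_scope.

Lemma Sup_seq_ub (u : nat -> R) (M : R) :
  (forall n, u n <= M) -> Rbar_le (Sup_seq u) M.
Proof.
  intros Hu.
  apply (proj2 (is_sup_seq_lub _ _ (Sup_seq_correct u))).
  intros x [n ->]. apply Hu.
Qed.

Lemma quadratic_rec_bounded (alpha1 alpha2 : R) (a : nat -> R) :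
  0 <= alpha1 -> 0 <= alpha2 -> 4 * alpha1 * alpha2 <= 1 ->
  (forall k, 0 <= a k) -> a 0%nat <= 2 * alpha2 ->
  (forall k, a (S k) <= alpha1 * a k ^ 2 + alpha2) ->
  forall k, a k <= 2 * alpha2.
Proof.
  intros Ha1 Ha2 Hprod Ha_nn Ha0 Ha_rec k.
  induction k as [|k IH]; [exact Ha0|].
  assert (Hsq : a k ^ 2 <= (2 * alpha2) ^ 2) by (apply pow_incr; split; auto).
  pose proof (Ha_rec k).
  nra.
Qed.

Lemma contraction_step (beta1 beta2 gamma x : R) :
  0 <= x -> beta2 * x <= gamma - beta1 ->
  beta1 * x + beta2 * x ^ 2 <= gamma * x.
Proof. intros Hx Hsmall. nra. Qed.

Lemma quadratic_rec_geometric (beta1 beta2 gamma : R) (u : nat -> R) :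
  0 <= beta2 -> 0 <= gamma <= 1 ->
  (forall k, 0 <= u k) ->
  (forall k, u (S k) <= beta1 * u k + beta2 * u k ^ 2) ->
  beta2 * u 0%nat <= gamma - beta1 ->
  forall k, u k <= u 0%nat * gamma ^ k.
Proof.
  intros Hb2 Hg Hu_nn Hu_rec Hu0 k.
  induction k as [|k IH]; [simpl; lra|].
  assert (Hgk : gamma ^ k <= 1) by (rewrite <- (pow1 k); apply pow_incr; lra).
  assert (Hsmall : beta2 * u k <= gamma - beta1).
  { assert (u k <= u 0%nat) by (pose proof (Hu_nn 0%nat); nra). nra. }
  pose proof (contraction_step beta1 beta2 gamma (u k) (Hu_nn k) Hsmall).
  pose proof (Hu_rec k).
  simpl. nra.
Qed.

Lemma series_geometric_domination (u : nat -> R) (gamma C : R) :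
  0 <= gamma < 1 -> (forall k, 0 <= u k <= C * gamma ^ k) ->
  ex_series u /\ Series u <= C / (1 - gamma).
Proof.
  intros Hg Hu.
  assert (Hgeo : is_series (fun k => C * gamma ^ k) (C / (1 - gamma))).
  { apply (is_series_scal_l C (fun k => gamma ^ k)), is_series_geom.
    rewrite Rabs_pos_eq; lra. }
  split.
  - apply (@ex_series_le R_AbsRing R_CompleteNormedModule _ (fun k => C * gamma ^ k)).
    + intros k. change norm with Rabs. rewrite Rabs_pos_eq; apply Hu.
    + eexists; exact Hgeo.
  - rewrite <- (is_series_unique _ _ Hgeo).
    apply Series_le; [exact Hu | eexists; exact Hgeo].
Qed.

Theorem lemma4p2 (alpha1 alpha2 beta1 beta2 gamma : R) (a b : nat -> R)
  (Ha1 : 0 < alpha1) (Ha2 : 0 < alpha2) (Hb1 : 0 < beta1) (Hb2 : 0 < beta2)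
  (Ha_nn : forall k : nat, 0 <= a k)
  (Hb_nn : forall k : nat, (1 <= k)%nat -> 0 <= b k)
  (Ha_rec : forall k : nat, a (S k) <= alpha1 * (a k)^2 + alpha2)
  (Hb_rec : forall k : nat, (1 <= k)%nat -> b (S k) <= beta1 * b k + beta2 * (b k)^2)
  (Halpha : alpha2 <= 1 / (4 * alpha1))
  (Hbeta : beta1 < 1)
  (Ha0 : a 0%nat = 0)
  (Hgamma : beta1 < gamma /\ gamma < 1)
  (Hb1bound : b 1%nat <= (gamma - beta1) / beta2) :
  Rbar_le (Finite 0) (Sup_seq a) /\ Rbar_le (Sup_seq a) (Finite (2 * alpha2)) /\
  ex_series (fun k => b (S k)) /\
  Series (fun k => b (S k)) <= b 1%nat / (1 - gamma).
Proof.
  assert (Hprod : 4 * alpha1 * alpha2 <= 1).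
  { assert (4 * alpha1 * (1 / (4 * alpha1)) = 1) by (field; lra). nra. }
  assert (Ha_bound : forall k, a k <= 2 * alpha2).
  { apply (quadratic_rec_bounded alpha1 alpha2 a); auto; lra. }
  assert (Hbs_nn : forall k, 0 <= b (S k)) by (intros k; apply Hb_nn; lia).
  assert (Hb_small : beta2 * b 1%nat <= gamma - beta1).
  { assert (beta2 * ((gamma - beta1) / beta2) = gamma - beta1) by (field; lra).
    nra. }
  assert (Hb_geo : forall k, b (S k) <= b 1%nat * gamma ^ k).
  { apply (quadratic_rec_geometric beta1 beta2 gamma (fun k => b (S k)));
      auto; try lra.
    intros k. apply Hb_rec. lia. }
  destruct (series_geometric_domination (fun k => b (S k)) gamma (b 1%nat))
    as [Hex Hsum]; [lra | intros k; auto |].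
  repeat split; auto.
  - apply (Sup_seq_minor_le a 0 0%nat), Ha_nn.
  - apply Sup_seq_ub, Ha_bound.
Qed.
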